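(* Let $G$ be an antimatroid on a ground set $S$ with $|S|=n$, and write its Tutte polynomial as $T(G;x,y)=\sum_{i,j}b_{i,j}x^iy^j$. For $i,j\ge0$ let $a_{i,j}$ be the number of convex sets $C$ of $G$ with $|C|=i$ and $|\mathrm{int}(C)|=j$. Then $$b_{i,j}=\sum_{s=i}^{n}(-1)^{s-i}\binom{s}{i}a_{s,j}.$$
   Context: An antimatroid on a finite set $S$ is a family $\mathcal{F}\subseteq 2^S$ of feasible sets with $\emptyset\in\mathcal{F}$, $S\in\mathcal{F}$, $F_1\cup F_2\in\mathcal{F}$ whenever $F_1,F_2\in\mathcal{F}$, and accessible: every nonempty $F\in\mathcal{F}$ contains some $x$ with $F\setminus\{x\}\in\mathcal{F}$. Its rank function is $r(A)=\max\{|F|:F\in\mathcal{F},F\subseteq A\}$ (so $r(S)=|S|$), and its Tutte polynomial is $T(G;x,y)=\sum_{A\subseteq S}(x-1)^{r(S)-r(A)}(y-1)^{|A|-r(A)}$. A set $C$ is convex if $S\setminus C\in\mathcal{F}$; convex sets are closed under intersection, and the convex closure $\overline{A}$ of $A$ is the smallest convex set containing $A$. For convex $C$, $p\in C$ is extreme if $p\notin\overline{C\setminus\{p\}}$; $\mathrm{int}(C)$ is the set of non-extreme points of $C$. *)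

From mathcomp Require Import all_boot all_order all_algebra.
Set Implicit Arguments. Unset Strict Implicit. Unset Printing Implicit Defensive.
Import GRing.Theory Num.Theory.
Local Open Scope ring_scope.

Section Antimatroid.
Variable S : finType.
Implicit Types (F : {set {set S}}) (A C : {set S}).

Definition is_antimatroid F : Prop :=
  [/\ set0 \in F, [set: S] \in F,
      (forall X1 X2 : {set S}, X1 \in F -> X2 \in F -> X1 :|: X2 \in F) &
      (forall X : {set S}, X \in F -> X != set0 -> exists2 x, x \in X & X :\ x \in F)].

Definition am_rank F A : nat := \max_(X in F | X \subset A) #|X|.

(* Tutte polynomial as a polynomial in x with coefficients polynomials in y:
   T(x,y) = sum_A (x-1)^(r(S)-r(A)) (y-1)^(|A|-r(A)). *)
Definition am_tutte F : {poly {poly int}} :=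
  \sum_(A : {set S})
     ('X - 1) ^+ (am_rank F [set: S] - am_rank F A)%N
     * (('X - 1) ^+ (#|A| - am_rank F A)%N)%:P.

Definition tutte_coef F (i j : nat) : int := ((am_tutte F)`_i)`_j.

Definition convex F C : bool := ~: C \in F.

Definition cclosure F A : {set S} :=
  \bigcap_(C | convex F C && (A \subset C)) C.

Definition extreme F C p : bool := (p \in C) && (p \notin cclosure F (C :\ p)).

Definition cint F C : {set S} := [set p in C | ~~ extreme F C p].

Definition conv_count F (i j : nat) : nat :=
  #|[set C : {set S} | convex F C && (#|C| == i) && (#|cint F C| == j)]|.

End Antimatroid.

From mathcomp Require Import all_boot all_order all_algebra.
Import GRing.Theory Num.Theory.
Set Implicit Arguments. Unset Strict Implicit. Unset Printing Implicit Defensive.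
Local Open Scope ring_scope.

(* Every A has a largest feasible subset, its kernel, and am_rank A is its
   size.  By the augmentation property, the sets with kernel K are exactly
   K :|: B with B a subset of the non-extreme points of the convex set ~: K.
   Grouping the subsets A by kernel and summing over B by the binomial
   theorem gives T(x, y) = sum over convex C of (x - 1)^|C| y^|int C|;
   expanding (x - 1)^|C| yields the formula for the coefficients. *)

Lemma sum_by_card (T : finType) (R : nmodType) (P : pred {set T})
    (g : nat -> R) N :
  (forall B, P B -> (#|B| < N)%N) ->
  \sum_(B | P B) g #|B| = \sum_(m < N) g m *+ #|[set B | P B & #|B| == m]|.
Proof.
move=> ltBN.
transitivity (\sum_(m < N) \sum_(B in [set B | P B & #|B| == m]) g #|B|).
  rewrite (exchange_big_dep P) /=; last by move=> m B _; rewrite inE => /andP[].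
  apply: eq_bigr => B PB.
  rewrite (bigD1 (Ordinal (ltBN B PB))) /=; last by rewrite inE PB eqxx.
  rewrite big1 ?addr0 // => m /andP[]; rewrite inE PB /= => /eqP cardB.
  by move/eqP; case; apply/val_inj; rewrite /= cardB.
apply: eq_bigr => m _; rewrite -sumr_const; apply: eq_bigr => B.
by rewrite inE => /andP[_ /eqP->].
Qed.

Lemma sum_subset_exp (T : finType) (R : pzSemiRingType) (z : R) (I : {set T}) :
  \sum_(B : {set T} | B \subset I) z ^+ #|B| = (z + 1) ^+ #|I|.
Proof.
rewrite exprD1n (sum_by_card (fun m => z ^+ m) (N := #|I|.+1)).
  by apply: eq_bigr => m _; rewrite cards_draws.
by move=> B sBI; rewrite ltnS subset_leq_card.
Qed.

Lemma coef_Xsub1_exp (R : comNzRingType) s i :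
  (('X - 1 : {poly R}) ^+ s)`_i = (-1) ^+ (s - i) * ('C(s, i))%:R.
Proof.
rewrite addrC exprDn coef_sum.
under eq_bigr => k _.
  rewrite coefMn -(rmorphN1 (@polyC R)) -rmorphXn coefCM coefXn.
over.
have [le_is | lt_si] := leqP i s; last first.
  rewrite bin_small // mulr0 big1 // => k _.
  by rewrite eqn_leq leqNgt (leq_trans (ltn_ord k) lt_si) mulr0 mul0rn.
rewrite (bigD1 (Ordinal (le_is : (i < s.+1)%N))) //= eqxx mulr1 mulr_natr.
rewrite big1 ?addr0 // => k neq_ki.
have /negPf-> : i != k by apply: contraNneq neq_ki => ik; apply/eqP/val_inj.
by rewrite mulr0 mul0rn.
Qed.

Section Kernel.

Variables (S : finType) (F : {set {set S}}).
Implicit Types A B K X Y : {set S}.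

Definition kernel (A : {set S}) : {set S} := \bigcup_(X in F | X \subset A) X.

Lemma kernel_sub A : kernel A \subset A.
Proof. by apply/bigcupsP => X /andP[]. Qed.

Lemma cint_sub C : cint F C \subset C.
Proof. by apply/subsetP => x; rewrite inE => /andP[]. Qed.

Lemma sub_kernel A X : X \in F -> X \subset A -> X \subset kernel A.
Proof. by move=> FX sXA; apply: (bigcup_sup X); rewrite FX. Qed.

Hypothesis amF : is_antimatroid F.

Lemma kernel_feasible A : kernel A \in F.
Proof.
have [F0 _ FU _] := amF.
by apply: (big_ind (fun X => X \in F)) => // X /andP[].
Qed.

Lemma am_rankE A : am_rank F A = #|kernel A|.
Proof.
apply/eqP; rewrite eqn_leq; apply/andP; split.
  by apply/bigmax_leqP => X /andP[FX sXA]; apply/subset_leq_card/sub_kernel.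
by apply: (leq_bigmax_cond (kernel A)); rewrite kernel_feasible kernel_sub.
Qed.

Lemma am_rankT : am_rank F [set: S] = #|S|.
Proof.
have [_ FT _ _] := amF.
suff kT : kernel [set: S] = [set: S] by rewrite am_rankE kT cardsT.
by apply/eqP; rewrite eqEsubset subsetT sub_kernel.
Qed.

(* Induction on |Y|: remove some y from Y keeping it feasible; if Y :\ y
   already lies in K, then y |: K = K :|: Y is feasible. *)
Lemma feasible_augment K Y : K \in F -> Y \in F -> ~~ (Y \subset K) ->
  exists2 x, x \in Y :\: K & x |: K \in F.
Proof.
move=> FK; have [m] := ubnP #|Y|; elim: m Y => // m IH Y ltYm FY nsYK.
have [_ _ FU FA] := amF.
have [|y Yy FYy] := FA Y FY; first by apply: contraNneq nsYK => ->; apply: sub0set.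
have [sYyK | nsYyK] := boolP (Y :\ y \subset K); last first.
  have [|x] := IH (Y :\ y) _ FYy nsYyK; first by rewrite (cardsD1 y) Yy in ltYm.
  by rewrite !inE => /and3P[Kx _ Yx] FxK; exists x; rewrite ?inE ?Kx.
have KyY : y |: K = K :|: Y.
  apply/setP => z; rewrite !inE; have [-> | neq_zy] := eqVneq z y; first by rewrite Yy orbT.
  case Kz: (z \in K) => //=; apply/esym; apply: contraFF Kz => Yz.
  by apply: (subsetP sYyK); rewrite !inE neq_zy.
exists y; last by rewrite KyY FU.
rewrite inE Yy andbT; apply: contraNN nsYK => Ky.
by rewrite -(setD1K Yy) subUset sub1set Ky.
Qed.

Lemma cclosure_convex A : convex F (cclosure F A).
Proof.
have [F0 _ FU _] := amF; rewrite /convex /cclosure setC_bigcap.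
by apply: (big_ind (fun X => X \in F)) => // X /andP[].
Qed.

Lemma extremeE C p : convex F C -> p \in C -> extreme F C p = (~: (C :\ p) \in F).
Proof.
move=> cC Cp; rewrite /extreme Cp /=.
have sub_cl : C :\ p \subset cclosure F (C :\ p) by apply/bigcapsP => X /andP[].
have cl_sub : cclosure F (C :\ p) \subset C by apply: bigcap_inf; rewrite cC subsetDl.
apply/idP/idP => [ncl_p | FCp].
  suff <- : cclosure F (C :\ p) = C :\ p by apply: cclosure_convex.
  apply/eqP; rewrite eqEsubset sub_cl andbT; apply/subsetP => z clz.
  rewrite !inE (subsetP cl_sub _ clz) andbT.
  by apply: contraNneq ncl_p => eq_zp; rewrite -{1}eq_zp.
apply/negP => cl_p.
have : cclosure F (C :\ p) \subset C :\ p by apply: bigcap_inf; rewrite /convex FCp subxx.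
by move/subsetP/(_ p cl_p); rewrite !inE eqxx.
Qed.

Lemma extreme_setC K x : K \in F -> x \notin K -> extreme F (~: K) x = (x |: K \in F).
Proof.
move=> FK Kx; rewrite extremeE ?inE //; last by rewrite /convex setCK.
by rewrite setCD setCK setUC.
Qed.

Lemma kernel_eq K A : K \in F ->
  (kernel A == K) = (K \subset A) && (A :\: K \subset cint F (~: K)).
Proof.
move=> FK; apply/eqP/andP => [<- | [sKA sAKint]].
  split; first exact: kernel_sub.
  apply/subsetP => x; rewrite !inE => /andP[kAx Ax].
  rewrite kAx extreme_setC ?kernel_feasible //; apply: contra kAx => FxkA.
  by apply: (subsetP (sub_kernel FxkA _)); rewrite ?setU11 // subUset sub1set Ax kernel_sub.
apply/eqP; rewrite eqEsubset sub_kernel // andbT; apply: contraT => nskK.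
have [x] := feasible_augment FK (kernel_feasible A) nskK.
rewrite inE => /andP[Kx kAx] FxK.
have /(subsetP sAKint) : x \in A :\: K by rewrite inE Kx (subsetP (kernel_sub A)).
by rewrite inE extreme_setC // FxK => /andP[].
Qed.

Lemma kernel_setU K B : K \in F -> B \subset cint F (~: K) -> kernel (K :|: B) = K.
Proof.
move=> FK sBint; apply/eqP; rewrite kernel_eq // subsetUl /=.
by apply: subset_trans sBint; rewrite setDUl setDv set0U subsetDl.
Qed.

Lemma sum_kernel_eq (R : nmodType) (f : {set S} -> R) K : K \in F ->
  \sum_(A | kernel A == K) f A = \sum_(B : {set S} | B \subset cint F (~: K)) f (K :|: B).
Proof.
move=> FK.
have int_disj : [disjoint cint F (~: K) & K] by rewrite disjoints_subset cint_sub.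
rewrite (reindex_onto (fun B : {set S} => K :|: B) (fun A => A :\: K)) /=; last first.
  by move=> A /eqP kAK; rewrite setDE setUIr setUCr setIT; apply/setUidPr; rewrite -kAK kernel_sub.
apply: eq_bigl => B; rewrite kernel_eq // subsetUl /= setDUl setDv set0U.
apply/andP/idP => [[sBK_int /eqP <-] // | sBint].
have /setDidPl-> : [disjoint B & K] by apply: disjointWl int_disj.
by rewrite sBint eqxx.
Qed.

Lemma am_tutte_convex :
  am_tutte F = \sum_(C : {set S} | convex F C)
     ('X - 1) ^+ #|C| * ('X ^+ #|cint F C|)%:P.
Proof.
rewrite /am_tutte (partition_big kernel (mem F)) /=; last by move=> A _; apply: kernel_feasible.
rewrite [RHS](reindex_inj (@setC_inj S)) /=.
apply: eq_big => [K | K FK]; first by rewrite /convex setCK.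
rewrite sum_kernel_eq // -[X in (X ^+ _)%:P](subrK 1) -sum_subset_exp rmorph_sum mulr_sumr.
apply: eq_bigr => B sBint; rewrite am_rankT !am_rankE kernel_setU //.
have /disjoint_setI0 KB0 : [disjoint K & B].
  by rewrite disjoint_sym disjoints_subset (subset_trans sBint) ?cint_sub.
by rewrite cardsU KB0 cards0 subn0 -(cardsC K) !addKn.
Qed.

End Kernel.

Theorem lemma4p3 (S : finType) (F : {set {set S}}) (n : nat) :
  is_antimatroid F -> #|S| = n ->
  forall i j : nat,
    tutte_coef F i j =
    \sum_(i <= s < n.+1) (-1) ^+ (s - i) * ('C(s, i))%:R * (conv_count F s j)%:R.
Proof.
move=> amF cardS i j.
pose g s : int := (-1) ^+ (s - i) * ('C(s, i))%:R.
have -> : tutte_coef F i j = \sum_(C | convex F C && (#|cint F C| == j)) g #|C|.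
  rewrite /tutte_coef am_tutte_convex // !coef_sum big_mkcondr /=.
  apply: eq_bigr => C _; rewrite coefMC coef_Xsub1_exp.
  have -> : (-1) ^+ (#|C| - i) * ('C(#|C|, i))%:R = (g #|C|)%:P.
    by rewrite rmorphM rmorphXn rmorphN1 rmorph_nat.
  rewrite coefCM coefXn eq_sym.
  by case: eqP => _; rewrite ?mulr1 ?mulr0.
rewrite (sum_by_card g (N := n.+1)); last by move=> C _; rewrite ltnS -cardS max_card.
rewrite big_geq_mkord [RHS]big_mkcond /=; apply: eq_bigr => s _.
case: leqP => [_ | lt_si]; last by rewrite /g bin_small // mulr0 mul0rn.
rewrite mulr_natr; congr (_ *+ _); apply: eq_card => C.
by rewrite !inE andbAC.
Qed.
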